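(* Let $A\subseteq\mathbb{N}$ have natural density $\rho(A)=\lim_{n\to\infty}\kappa_A(n)/n\in[0,1]$. Then $m(A)=\rho(A)\,\omega+o(\omega)$.
   Context: $\mathbb{N}=\{1,2,3,\dots\}$, $\mathbb{N}_0=\mathbb{N}\cup\{0\}$. $\mathbf{No}$ denotes Conway's ordered field of surreal numbers, $\omega=\{0,1,2,\dots\mid\ \}$ its first infinite element. An omnific integer is a surreal $x$ with $x=\{x-1\mid x+1\}$; $\mathbf{Nn}$ (surnatural numbers) is the class of nonnegative omnific integers, $\mathbb{N}_0\subset\mathbf{Nn}$. $o(\omega)$ denotes a surreal $w$ with $w/\omega$ infinitesimal. For $A\subseteq\mathbb{N}$, $\kappa_A(n)=|A\cap\{1,\dots,n\}|$. For $f,g:\mathbb{N}\to\mathbb{N}_0$, $f\overset{\to}{=}g$ means $f(n)=g(n)$ for all $n\ge N$ for some $N$; $f\overset{\to}{<}g$ means $f(n)<g(n)$ for all $n\ge N$ for some $N$. Axiom of Extension (standing assumption): every nondecreasing $f:\mathbb{N}\to\mathbb{N}_0$ has an extension $\hat f:\mathbf{Nn}\to\mathbf{Nn}$ with $\hat f(n)=f(n)$ for $n\in\mathbb{N}$ (constant sequences extend to the same constants, the identity extends to the identity), such that for nondecreasing $f,g$: $f\overset{\to}{=}g\Rightarrow\hat f(\nu)=\hat g(\nu)$ for all $\nu\in\mathbf{Nn}\setminus\mathbb{N}$; $f\overset{\to}{<}g\Rightarrow\hat f(\nu)<\hat g(\nu)$ for all $\nu\in\mathbf{Nn}\setminus\mathbb{N}$;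 and $\widehat{f+g}=\hat f+\hat g$, $\widehat{f\cdot g}=\hat f\cdot\hat g$, $\widehat{f\circ g}=\hat f\circ\hat g$ where defined. The magnum of $A\subseteq\mathbb{N}$ is $m(A):=\hat{\kappa_A}(\omega)$. *)

From HB Require Import structures.
From mathcomp Require Import all_boot all_order all_algebra.
From mathcomp Require Import all_classical all_reals all_analysis.
Set Implicit Arguments. Unset Strict Implicit. Unset Printing Implicit Defensive.
Import Order.TTheory GRing.Theory Num.Theory.
Import numFieldNormedType.Exports.
Local Open Scope classical_set_scope.
Local Open Scope ring_scope.

(* kappa_A(n) = |A ∩ {1,...,n}| ; A ⊆ ℕ = {1,2,...} is given by a predicate,
   whose value at 0 is irrelevant. *)
Definition kappa (A : pred nat) (n : nat) : nat := count A (iota 1 n).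

Definition nondecr (f : nat -> nat) : Prop :=
  forall n m : nat, (0 < n)%N -> (n <= m)%N -> (f n <= f m)%N.

Definition ev_eq (f g : nat -> nat) : Prop :=
  exists N : nat, forall n : nat, (N <= n)%N -> f n = g n.
Definition ev_lt (f g : nat -> nat) : Prop :=
  exists N : nat, forall n : nat, (N <= n)%N -> (f n < g n)%N.

Definition nonstd_Nn (F : realFieldType) (Nn : F -> Prop) (x : F) : Prop :=
  Nn x /\ forall n : nat, x <> n%:R.

Definition surnat_class (F : realFieldType) (Nn : F -> Prop) : Prop :=
  (forall n : nat, Nn n%:R) /\ (forall x, Nn x -> 0 <= x).

Record extension_axiom (F : realFieldType) (Nn : F -> Prop)
    (ext : (nat -> nat) -> F -> F) : Prop := {
  ext_Nn : forall f, nondecr f -> forall x, Nn x -> Nn (ext f x);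
  ext_nat : forall f, nondecr f -> forall n : nat, (0 < n)%N ->
      ext f n%:R = (f n)%:R;
  ext_const : forall (c : nat) x, Nn x -> ext (fun _ => c) x = c%:R;
  ext_id : forall x, Nn x -> ext (fun n => n) x = x;
  ext_ev_eq : forall f g, nondecr f -> nondecr g -> ev_eq f g ->
      forall nu, nonstd_Nn Nn nu -> ext f nu = ext g nu;
  ext_ev_lt : forall f g, nondecr f -> nondecr g -> ev_lt f g ->
      forall nu, nonstd_Nn Nn nu -> ext f nu < ext g nu;
  ext_add : forall f g, nondecr f -> nondecr g -> forall x, Nn x ->
      ext (fun n => (f n + g n)%N) x = ext f x + ext g x;
  ext_mul : forall f g, nondecr f -> nondecr g -> forall x, Nn x ->
      ext (fun n => (f n * g n)%N) x = ext f x * ext g x;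
  ext_comp : forall f g, nondecr f -> nondecr g ->
      (forall n, (0 < n)%N -> (0 < g n)%N) -> forall x, Nn x ->
      ext (fun n => f (g n)) x = ext f (ext g x)
}.

Definition infinitesimal (F : realFieldType) (x : F) : Prop :=
  forall n : nat, (0 < n)%N -> `|x| < n%:R^-1.

Definition little_o_omega (F : realFieldType) (omega w : F) : Prop :=
  infinitesimal (w / omega).

Definition has_density (R : realType) (A : pred nat) (rho : R) : Prop :=
  (fun n : nat => (kappa A n)%:R / n%:R : R) @ \oo --> rho.

(* Writing E = m(A) and e = E / omega, the axioms transfer every eventual
   comparison a kappa_A(k) + c k < b kappa_A(k) + d k (a, b, c, d natural) to
   a E + c omega < b E + d omega, i.e. a e + c < b e + d.  Natural density
   makes such a comparison eventual as soon as a rho + c < b rho + d, so e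
   satisfies every strict natural-linear inequality that rho does, and two of
   them, with the bracket p <= 2 n rho < p + 1, pin e to within 1/n of rho. *)
From HB Require Import structures.
From mathcomp Require Import all_boot all_order all_algebra.
From mathcomp Require Import all_classical all_reals all_analysis.
From mathcomp Require Import lra.
Set Implicit Arguments. Unset Strict Implicit. Unset Printing Implicit Defensive.
Import Order.TTheory GRing.Theory Num.Theory.
Local Open Scope classical_set_scope.
Local Open Scope ring_scope.

Definition lincomb (f : nat -> nat) (a c : nat) (k : nat) : nat :=
  (a * f k + c * k)%N.

Lemma kappa_nondecr (A : pred nat) : nondecr (kappa A).
Proof.
move=> n m _ /subnKC <-; rewrite /kappa iotaD count_cat; exact: leq_addr.
Qed.

Lemma scale_nondecr (f : nat -> nat) (a : nat) :
  nondecr f -> nondecr (fun k => a * f k)%N.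
Proof. by move=> Hf n m n0 nm; rewrite leq_mul2l Hf ?orbT. Qed.

Lemma lincomb_nondecr f a c : nondecr f -> nondecr (lincomb f a c).
Proof.
move=> Hf n m n0 nm; apply: leq_add; first exact: (scale_nondecr a Hf).
by rewrite leq_mul2l nm orbT.
Qed.

Lemma infinitesimal_sub_of_nat_bracketing (F : realFieldType) (x e : F) :
    (forall n : nat, exists p : nat, p%:R <= n%:R * x < p.+1%:R) ->
    (forall a c b d : nat,
      a%:R * x + c%:R < b%:R * x + d%:R -> a%:R * e + c%:R < b%:R * e + d%:R) ->
  infinitesimal (e - x).
Proof.
move=> bracket transfer n n0.
have [p /andP [p_le p_gt]] := bracket (2 * n)%N.
have upper : (2 * n)%:R * e < p.+1%:R.
  have := transfer (2 * n)%N 0 0 p.+1.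
  by rewrite !mulr0n !mul0r !addr0 !add0r; apply.
have lower : p%:R < (2 * n)%:R * e + 1.
  have := transfer 0 p (2 * n)%N 1; rewrite !mulr0n !mul0r !add0r; apply.
  by rewrite (le_lt_trans p_le) // ltrDl.
have n_gt0 : 0 < n%:R :> F by rewrite ltr0n.
move: upper lower p_le p_gt; rewrite natrM => upper lower p_le p_gt.
rewrite ltr_norml ltrNl; apply/andP.
by split; rewrite -(ltr_pM2l n_gt0) mulfV ?gt_eqF //; nra.
Qed.

Section ExtensionAtOmega.

Variables (F : realFieldType) (Nn : F -> Prop) (omega : F).
Variable ext : (nat -> nat) -> F -> F.
Hypothesis omega_Nn : Nn omega.
Hypothesis omega_infinite : forall n : nat, n%:R < omega.
Hypothesis Hext : extension_axiom Nn ext.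

Lemma omega_gt0 : 0 < omega.
Proof. exact: omega_infinite 0. Qed.

Lemma omega_nonstd : nonstd_Nn Nn omega.
Proof. by split=> // n omega_n; have := omega_infinite n; rewrite omega_n ltxx. Qed.

Lemma ext_lincomb f a c : nondecr f ->
  ext (lincomb f a c) omega = a%:R * ext f omega + c%:R * omega.
Proof.
have const_nondecr (k : nat) : nondecr (fun=> k) by [].
have id_nondecr : nondecr id by [].
move=> Hf; rewrite /lincomb.
rewrite (ext_add Hext (scale_nondecr a Hf) (scale_nondecr c id_nondecr)) //.
rewrite (ext_mul Hext (const_nondecr a) Hf) // (ext_mul Hext (const_nondecr c) id_nondecr) //.
by rewrite !(ext_const Hext) // (ext_id Hext).
Qed.

Lemma ext_ratio_lt_of_ev_lt f a c b d : nondecr f ->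
    ev_lt (lincomb f a c) (lincomb f b d) ->
  a%:R * (ext f omega / omega) + c%:R < b%:R * (ext f omega / omega) + d%:R.
Proof.
move=> Hf lt_fg.
have := ext_ev_lt Hext (lincomb_nondecr a c Hf) (lincomb_nondecr b d Hf) lt_fg omega_nonstd.
have omega_inv_gt0 : 0 < omega^-1 by rewrite invr_gt0 omega_gt0.
rewrite !ext_lincomb // -(ltr_pM2r omega_inv_gt0) !mulrDl !mulrA.
by rewrite !mulfK ?gt_eqF ?omega_gt0.
Qed.

End ExtensionAtOmega.

Section Density.

Variables (R : realType) (A : pred nat) (rho : R).
Hypothesis density : has_density A rho.

Lemma density_ev_lt a c b d : a%:R * rho + c%:R < b%:R * rho + d%:R ->
  ev_lt (lincomb (kappa A) a c) (lincomb (kappa A) b d).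
Proof.
rewrite -subr_gt0 => gap.
have margin_cvg : (b%:R - a%:R : R) * ((kappa A k)%:R / k%:R) + (d%:R - c%:R)
    @[k --> \oo] --> (b%:R - a%:R) * rho + (d%:R - c%:R).
  by apply: cvgD; [exact: cvgMl_tmp | exact: cvg_cst].
have margin_gt0 : 0 < (b%:R - a%:R) * rho + (d%:R - c%:R).
  by rewrite mulrBl addrACA -opprD.
have [N _ margin_pos] := cvgr_gt _ margin_cvg 0 margin_gt0.
exists N.+1 => k Nk; rewrite -(ltr_nat R) /lincomb !natrD !natrM -subr_gt0.
have k_gt0 : 0 < k%:R :> R by rewrite ltr0n (leq_ltn_trans _ Nk).
have := margin_pos k (ltnW Nk); rewrite -(ltr_pM2r k_gt0) mul0r mulrDl.
by rewrite -mulrA mulfVK ?gt_eqF // => margin_k; nra.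
Qed.

Lemma density_ge0 : 0 <= rho.
Proof.
rewrite leNgt; apply/negP => rho_lt0.
have [N kappa_lt0] : ev_lt (lincomb (kappa A) 1 0) (lincomb (kappa A) 0 0).
  by apply: density_ev_lt; rewrite !mul0r mul1r !addr0.
by have := kappa_lt0 N (leqnn N).
Qed.

End Density.

Theorem theorem6p7 (R : realType) (F : realFieldType)
    (iota : {rmorphism R -> F}) (iota_mono : {mono iota : x y / x <= y})
    (Nn : F -> Prop) (omega : F) (ext : (nat -> nat) -> F -> F)
    (HNn : surnat_class Nn) (Homega_Nn : Nn omega)
    (Homega_inf : forall n : nat, n%:R < omega)
    (Hext : extension_axiom Nn ext)
    (A : pred nat) (rho : R) (Hrho : has_density A rho) :
  exists w : F, little_o_omega omega w /\
    ext (kappa A) omega = iota rho * omega + w.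
Proof.
set E := ext (kappa A) omega.
exists (E - iota rho * omega); split; last by rewrite addrC subrK.
rewrite /little_o_omega mulrBl mulfK ?gt_eqF ?(omega_gt0 Homega_inf) //.
have iota_lin (a c : nat) : iota (a%:R * rho + c%:R) = a%:R * iota rho + c%:R.
  by rewrite rmorphD rmorphM /= !rmorph_nat.
apply: infinitesimal_sub_of_nat_bracketing => [n | a c b d].
  have /andP [p_le p_gt] := truncn_itv (mulr_ge0 (ler0n R n) (density_ge0 Hrho)).
  exists (Num.truncn (n%:R * rho)).
  by rewrite -!(rmorph_nat iota) -rmorphM iota_mono (leW_mono iota_mono) p_le.
rewrite -!iota_lin (leW_mono iota_mono) => /(density_ev_lt Hrho).
exact: (ext_ratio_lt_of_ev_lt Homega_Nn Homega_inf Hext (kappa_nondecr A)).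
Qed.
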